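(* Let $A$ be a complete filtered associative algebra over a field $\mathbb{K}$ of characteristic zero, and let $P:A\to A$ be a linear map preserving the filtration which is moreover an idempotent algebra homomorphism. Let $\chi:A_1\to A_1$ be the BCH-recursion map associated to $P$. Then for every $u\in A_1$, $$\chi(u)=u+\mathrm{BCH}\big(-P(u),u\big).$$
   Context: A complete filtered associative algebra is an associative algebra $A$ with a decreasing filtration $A=A_0\supseteq A_1\supseteq\cdots$ by subalgebras with $A_mA_n\subseteq A_{m+n}$ and $A\cong\varprojlim A/A_n$. $\mathrm{BCH}(x,y)$ is the Baker--Campbell--Hausdorff series defined by $\exp(x)\exp(y)=\exp(x+y+\mathrm{BCH}(x,y))$. With $\tilde P:=\mathrm{id}_A-P$, the BCH-recursion map associated to $P$ is the unique map $\chi:A_1\to A_1$ satisfying $\chi(a)=a-\mathrm{BCH}\big(P(\chi(a)),\tilde P(\chi(a))\big)$ for all $a\in A_1$ (the limit of the iteration $\chi_{(0)}(a)=a$, $\chi_{(n+1)}(a)=a-\mathrm{BCH}(P(\chi_{(n)}(a)),\tilde P(\chi_{(n)}(a)))$ in the filtration topology). *)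

From HB Require Import structures.
From mathcomp Require Import all_boot all_order all_algebra.
From Stdlib Require Import ClassicalEpsilon.
Set Implicit Arguments. Unset Strict Implicit. Unset Printing Implicit Defensive.
Import Order.TTheory GRing.Theory.
Local Open Scope ring_scope.

Section FilteredAlgebra.
Variables (K : fieldType) (A : algType K).

(* A decreasing filtration A = A_0 ⊇ A_1 ⊇ ... by subspaces (A_n for n>=1 are
   non-unital subalgebras by the product condition), with A_m A_n ⊆ A_(m+n),
   and A ≅ lim A/A_n, i.e. A -> lim A/A_n is injective (Hausdorff) and
   surjective (every compatible family has a preimage). *)
Definition complete_filtration (F : nat -> A -> Prop) : Prop :=
  (forall x, F 0%N x) /\
  (forall n x, F n.+1 x -> F n x) /\
  (forall n, F n 0) /\
  (forall n x y, F n x -> F n y -> F n (x + y)) /\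
  (forall n (c : K) x, F n x -> F n (c *: x)) /\
  (forall m n x y, F m x -> F n y -> F (m + n)%N (x * y)) /\
  (forall x, (forall n, F n x) -> x = 0) /\
  (forall s : nat -> A, (forall n, F n (s n.+1 - s n)) ->
     exists x, forall n, F n (x - s n)).

Definition is_flim (F : nat -> A -> Prop) (s : nat -> A) (x : A) : Prop :=
  forall n, exists N, forall m, (N <= m)%N -> F n (s m - x).

Definition flim (F : nat -> A -> Prop) (s : nat -> A) : A :=
  epsilon (inhabits 0) (is_flim F s).

Definition fexp F (x : A) : A :=
  flim F (fun n => \sum_(k < n) (((k`!)%:R : K)^-1 *: x ^+ k)).

Definition flog1p F (y : A) : A :=
  flim F (fun n => \sum_(k < n) (((-1) ^+ k / (k.+1)%:R : K) *: y ^+ k.+1)).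

Definition flog F (z : A) : A := flog1p F (z - 1).

Definition BCH F (x y : A) : A := flog F (fexp F x * fexp F y) - x - y.

Definition bch_rec F (P : A -> A) (a : A) : A :=
  flim F (fun n => iter n (fun c => a - BCH F (P c) (c - P c)) a).

End FilteredAlgebra.

From mathcomp Require Import all_boot all_order all_algebra.
From mathcomp Require Import ring.
From Stdlib Require Import ClassicalEpsilon.
Import GRing.Theory.
Local Open Scope ring_scope.
Set Implicit Arguments. Unset Strict Implicit. Unset Printing Implicit Defensive.

(* Put a := P u and w := log (exp (-a) exp u), so that u + BCH(-a, u) = w + a.
   Being a filtered idempotent algebra endomorphism, P commutes with exp - 1 and
   with log (1 + _); hence P w = log (exp (-a) exp a) = 0 and P (w + a) = a.
   As exp a exp w = exp u, BCH(a, w) = u - a - w, so w + a is a fixed point of the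
   recursion c |-> u - BCH(P c, c - P c).  Since BCH has no linear part, this
   recursion is a contraction for the filtration (inputs congruent modulo A_m give
   values congruent modulo A_(m+1)), so its iterates converge to w + a.
   The identities log (exp x) = x and exp (-x) exp x = 1 are checked on
   truncations, as polynomial identities in K[X] proved by differentiation;
   this is where characteristic zero is needed. *)

Section TruncatedSeries.
Variables (K : fieldType) (A : algType K).

Definition exp_trunc (x : A) n := \sum_(k < n) (k`!%:R^-1 : K) *: x ^+ k.

Definition log1p_trunc (y : A) n :=
  \sum_(k < n) ((-1) ^+ k / k.+1%:R : K) *: y ^+ k.+1.

Lemma exp_truncSr x n : exp_trunc x n.+1 = exp_trunc x n + n`!%:R^-1 *: x ^+ n.
Proof. by rewrite /exp_trunc big_ord_recr. Qed.

Lemma exp_truncSl x n :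
  exp_trunc x n.+1 = 1 + x * \sum_(k < n) (k.+1`!%:R^-1 : K) *: x ^+ k.
Proof.
rewrite /exp_trunc big_ord_recl fact0 invr1 scale1r expr0 mulr_sumr.
by congr (_ + _); apply: eq_bigr => k _; rewrite -scalerAr -exprS.
Qed.

Lemma log1p_truncSr y n :
  log1p_trunc y n.+1 = log1p_trunc y n + ((-1) ^+ n / n.+1%:R) *: y ^+ n.+1.
Proof. by rewrite /log1p_trunc big_ord_recr. Qed.

Lemma exp_trunc_sub1 x n :
  exp_trunc x n.+1 - 1 = \sum_(k < n) (k.+1`!%:R^-1 : K) *: x ^+ k.+1.
Proof.
by rewrite /exp_trunc big_ord_recl fact0 invr1 scale1r expr0 addrC addKr.
Qed.

Lemma exp_truncB x y n : exp_trunc x n.+2 - exp_trunc y n.+2 =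
  (x - y) + \sum_(k < n) (k.+2`!%:R^-1 : K) *: (x ^+ k.+2 - y ^+ k.+2).
Proof.
rewrite /exp_trunc !big_ord_recl /= fact0 invr1 !scale1r !expr0 !expr1.
rewrite opprD addrACA subrr add0r opprD addrACA -sumrB; congr (_ + _).
by apply: eq_bigr => k _; rewrite scalerBr.
Qed.

Lemma log1p_truncB y z n : log1p_trunc y n.+1 - log1p_trunc z n.+1 =
  (y - z) + \sum_(k < n) ((-1) ^+ k.+1 / k.+2%:R : K) *: (y ^+ k.+2 - z ^+ k.+2).
Proof.
rewrite /log1p_trunc !big_ord_recl /= expr0 div1r invr1 !scale1r !expr1.
rewrite opprD addrACA -sumrB; congr (_ + _).
by apply: eq_bigr => k _; rewrite scalerBr.
Qed.

End TruncatedSeries.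

Section HornerAlg.
Variables (K : fieldType) (A : algType K) (x : A).

Lemma horner_alg_exp_trunc (q : {poly K}) n :
  horner_alg x (exp_trunc q n) = exp_trunc (horner_alg x q) n.
Proof.
rewrite rmorph_sum; apply: eq_bigr => k _.
by rewrite -mul_polyC rmorphM /= horner_algC rmorphXn mulr_algl.
Qed.

Lemma horner_alg_log1p_trunc (q : {poly K}) n :
  horner_alg x (log1p_trunc q n) = log1p_trunc (horner_alg x q) n.
Proof.
rewrite rmorph_sum; apply: eq_bigr => k _.
by rewrite -mul_polyC rmorphM /= horner_algC rmorphXn mulr_algl.
Qed.

End HornerAlg.

Section Char0Polynomials.
Variable K : fieldType.
Hypothesis charK0 : [pchar K] =i pred0.

Lemma natrS_neq0 n : (n.+1%:R : K) != 0.
Proof. by rewrite ((pcharf0P K).1 charK0). Qed.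

Lemma coefS_deriv (p : {poly K}) i : p`_i.+1 = p^`()`_i / i.+1%:R.
Proof. by rewrite coef_deriv -[p`_i.+1 *+ _]mulr_natr mulfK ?natrS_neq0. Qed.

Lemma deriv_exp_trunc (q : {poly K}) n :
  (exp_trunc q n.+1)^`() = q^`() * exp_trunc q n.
Proof.
rewrite /exp_trunc big_ord_recl fact0 invr1 scale1r expr0 derivD derivC add0r.
rewrite linear_sum mulr_sumr; apply: eq_bigr => k _ /=.
rewrite linearZ /= deriv_exp /= -scalerMnr scalerMnl scalerAr.
congr (_ * (_ *: _)); rewrite /bump add1n -mulr_natr factS natrM invfM.
by rewrite mulrAC mulVf ?mul1r ?natrS_neq0.
Qed.

Lemma deriv_log1p_trunc (w : {poly K}) n :
  (log1p_trunc w n)^`() = w^`() * \sum_(k < n) (- w) ^+ k.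
Proof.
rewrite linear_sum mulr_sumr; apply: eq_bigr => k _ /=.
rewrite linearZ /= deriv_exp /= -scalerMnr scalerMnl scalerAr; congr (_ * _).
by rewrite -mulr_natr divfK ?natrS_neq0 // -scaleN1r exprZn.
Qed.

Lemma coef0_exp_trunc (q : {poly K}) n : q`_0 = 0 -> (exp_trunc q n.+1)`_0 = 1.
Proof. by move=> q0; rewrite exp_truncSl coefD coef0M q0 mul0r addr0 coefC. Qed.

Lemma coef_mul_exp_truncN n i : (i <= n)%N ->
  (exp_trunc (- 'X) n.+1 * exp_trunc 'X n.+1)`_i = (i == 0)%:R :> K.
Proof.
case: i => [|i] le_in.
  by rewrite coef0M !coef0_exp_trunc ?mulr1 // ?coefN coefX ?oppr0.
have deriv_prod : (exp_trunc (- 'X) n.+1 * exp_trunc 'X n.+1)^`() =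
    'X^n * (n`!%:R^-1 *: ((-1) ^+ n *: exp_trunc 'X n - exp_trunc (- 'X) n))
    :> {poly K}.
  rewrite derivM !deriv_exp_trunc derivN derivX !exp_truncSr.
  have -> : (- 'X) ^+ n = (-1) ^+ n *: 'X^n :> {poly K}.
    by rewrite -scaleN1r exprZn.
  rewrite -!mul_polyC; ring.
by rewrite coefS_deriv deriv_prod coefXnM le_in mul0r.
Qed.

Lemma coef_log1p_exp_trunc n i : (i <= n)%N ->
  (log1p_trunc (exp_trunc 'X n.+1 - 1) n.+1)`_i = (i == 1)%:R :> K.
Proof.
set R := \sum_(k < n) (k.+1`!%:R^-1 : K) *: ('X : {poly K}) ^+ k.
set w := exp_trunc 'X n.+1 - 1.
have def_w : w = 'X * R by rewrite /w exp_truncSl addrC addKr.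
case: i => [|i] le_in.
  rewrite coef_sum big1 // => k _.
  by rewrite coefZ exprS coef0M def_w coef0M coefX !mul0r mulr0.
set S := \sum_(k < n.+1) (- w) ^+ k.
have exp_trunc_n : exp_trunc 'X n = 1 + w - n`!%:R^-1 *: 'X^n.
  by rewrite /w exp_truncSr -!mul_polyC; ring.
have geom : (1 + w) * S = 1 - ('X * - R) ^+ n.+1.
  have := subrX1 (- w) n.+1; rewrite -/S mulrN -def_w => geomS.
  have -> : (1 + w) * S = - ((- w - 1) * S) by ring.
  by rewrite -geomS; ring.
have deriv_log : (log1p_trunc w n.+1)^`() =
    1 - 'X^n * ('X * (- R) ^+ n.+1 + n`!%:R^-1 *: S).
  rewrite deriv_log1p_trunc /w derivB deriv_exp_trunc derivX derivC subr0 mul1r.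
  rewrite -/w exp_trunc_n -/S mulrBl geom exprMn exprS -!mul_polyC.
  ring.
rewrite coefS_deriv deriv_log coefB coef1 coefXnM le_in subr0.
by case: i {le_in deriv_log} => [|i]; rewrite ?divr1 ?mul0r.
Qed.

End Char0Polynomials.

Section Filtration.
Variables (K : fieldType) (A : algType K) (F : nat -> A -> Prop).
Hypothesis HF : complete_filtration F.

Lemma filtT x : F 0 x. Proof. by case: HF. Qed.
Lemma filtS n x : F n.+1 x -> F n x. Proof. by case: HF => _ [H _]; apply: H. Qed.
Lemma filt0 n : F n 0. Proof. by case: HF => _ [_ [H _]]; apply: H. Qed.

Lemma filtD n x y : F n x -> F n y -> F n (x + y).
Proof. by case: HF => _ [_ [_ [H _]]]; apply: H. Qed.

Lemma filtZ n (c : K) x : F n x -> F n (c *: x).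
Proof. by case: HF => _ [_ [_ [_ [H _]]]]; apply: H. Qed.

Lemma filtM m n x y : F m x -> F n y -> F (m + n) (x * y).
Proof. by case: HF => _ [_ [_ [_ [_ [H _]]]]]; apply: H. Qed.

Lemma filt_eq0 x : (forall n, F n x) -> x = 0.
Proof. by case: HF => _ [_ [_ [_ [_ [_ [H _]]]]]]; apply: H. Qed.

Lemma filt_cauchy (s : nat -> A) : (forall n, F n (s n.+1 - s n)) ->
  exists x, forall n, F n (x - s n).
Proof. by case: HF => _ [_ [_ [_ [_ [_ [_ H]]]]]]; apply: H. Qed.

Lemma filt_le m n x : (m <= n)%N -> F n x -> F m x.
Proof.
move=> /subnK <-; elim: (n - m)%N => // k IHk Fx.
exact/IHk/filtS.
Qed.

Lemma filtN n x : F n x -> F n (- x).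
Proof. by rewrite -scaleN1r; apply: filtZ. Qed.

Lemma filtB n x y : F n x -> F n y -> F n (x - y).
Proof. by move=> Fx /filtN; apply: filtD. Qed.

Lemma filtMl n x y : F n y -> F n (x * y).
Proof. exact: (filtM (filtT x)). Qed.

Lemma filtMr n x y : F n x -> F n (x * y).
Proof. by move=> Fx; rewrite -[n]addn0; apply: filtM (filtT y). Qed.

Lemma filt_sum n I (r : seq I) (Q : pred I) (f : I -> A) :
  (forall i, Q i -> F n (f i)) -> F n (\sum_(i <- r | Q i) f i).
Proof. by move=> Ff; apply: big_ind => //; [apply: filt0 | apply: filtD]. Qed.

Lemma filtX k x : F 1 x -> F k (x ^+ k).
Proof.
move=> Fx; elim: k => [|k IHk]; first exact: filtT.
by rewrite exprS; apply: (filtM Fx).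
Qed.

Definition eqmodF n x y := F n (x - y).

Lemma eqmodF_refl n x : eqmodF n x x.
Proof. by rewrite /eqmodF subrr; apply: filt0. Qed.

Lemma eqmodF_sym n x y : eqmodF n x y -> eqmodF n y x.
Proof. by rewrite /eqmodF -[y - x]opprB; exact: filtN. Qed.

Lemma eqmodF_trans n x y z : eqmodF n x y -> eqmodF n y z -> eqmodF n x z.
Proof. by rewrite /eqmodF -(subrKA y x (- z)); exact: filtD. Qed.

Lemma eqmodFD n x x' y y' :
  eqmodF n x x' -> eqmodF n y y' -> eqmodF n (x + y) (x' + y').
Proof. by rewrite /eqmodF opprD addrACA; exact: filtD. Qed.

Lemma eqmodFN n x x' : eqmodF n x x' -> eqmodF n (- x) (- x').
Proof. by rewrite /eqmodF -opprD; exact: filtN. Qed.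

Lemma eqmodFB n x x' y y' :
  eqmodF n x x' -> eqmodF n y y' -> eqmodF n (x - y) (x' - y').
Proof. by move=> Ex Ey; apply/eqmodFD/eqmodFN. Qed.

Lemma eqmodFM n x x' y y' :
  eqmodF n x x' -> eqmodF n y y' -> eqmodF n (x * y) (x' * y').
Proof.
rewrite /eqmodF => Ex Ey.
have -> : x * y - x' * y' = x * (y - y') + (x - x') * y'.
  by rewrite mulrBr mulrBl addrA subrK.
by apply: filtD; [apply: filtMl | apply: filtMr].
Qed.

Lemma eqmodFX n x y k : eqmodF n x y -> eqmodF n (x ^+ k) (y ^+ k).
Proof.
move=> Exy; elim: k => [|k IHk]; first exact: eqmodF_refl.
by rewrite !exprS; apply: eqmodFM.
Qed.

Lemma eqmodF_filt n x y : eqmodF n x y -> F n y -> F n x.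
Proof. by rewrite /eqmodF => Exy Fy; rewrite -(subrK y x); apply: filtD. Qed.

Lemma eqmodF_eq x y : (forall n, eqmodF n.+1 x y) -> x = y.
Proof. by move=> Exy; apply/subr0_eq/filt_eq0 => n; apply/filtS/Exy. Qed.

Lemma flim_eq s x : is_flim F s x -> flim F s = x.
Proof.
move=> sx; have := epsilon_spec (inhabits 0) (is_flim F s) (ex_intro _ x sx).
rewrite -/(flim F s) => sy; apply: eqmodF_eq => n.
have [[N1 sxN1] [N2 syN2]] := (sx n.+1, sy n.+1).
set m := maxn N1 N2; rewrite /eqmodF.
have -> : flim F s - x = (s m - x) - (s m - flim F s).
  by rewrite opprB [RHS]addrC addrA subrK.
by apply: filtB; [apply: sxN1 | apply: syN2]; rewrite leq_max leqnn ?orbT.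
Qed.

Lemma flim_cauchy s : (forall n, F n (s n.+1 - s n)) ->
  forall n, eqmodF n (flim F s) (s n).
Proof.
move=> /filt_cauchy [x sx]; rewrite (@flim_eq s x) // => n.
exists n => m le_nm; rewrite -opprB; apply/filtN/(filt_le le_nm)/sx.
Qed.

Lemma flim_iter_contract (f : A -> A) x0 c :
  (forall m x y, F 1 x -> F 1 y -> F m (x - y) -> F m.+1 (f x - f y)) ->
  f c = c -> F 1 c -> F 1 x0 -> flim F (fun n => iter n f x0) = c.
Proof.
move=> f_contract fc Fc Fx0.
have iter_near n : F 1 (iter n f x0) /\ eqmodF n.+1 (iter n f x0) c.
  elim: n => [|n [Fxn Exn]] /=; first by split; last exact: filtB.
  have Exn1 : eqmodF n.+2 (f (iter n f x0)) c by rewrite -fc; apply: f_contract.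
  by split=> //; apply: (eqmodF_filt (filt_le _ Exn1)) Fc.
apply: flim_eq => n; exists n => m le_nm.
exact: filt_le (leqW le_nm) (iter_near m).2.
Qed.

Lemma eqmodF_fexp n x : F 1 x -> eqmodF n (fexp F x) (exp_trunc x n).
Proof.
move=> Fx; apply: (@flim_cauchy (exp_trunc x)) => m.
by rewrite exp_truncSr addrC addKr; apply/filtZ/filtX.
Qed.

Lemma eqmodF_flog1p n y : F 1 y -> eqmodF n (flog1p F y) (log1p_trunc y n).
Proof.
move=> Fy; apply: (@flim_cauchy (log1p_trunc y)) => m.
by rewrite log1p_truncSr addrC addKr; apply/filtZ/filtS/filtX.
Qed.

Lemma filt1_fexp_sub1 x : F 1 x -> F 1 (fexp F x - 1).
Proof.
move=> /(eqmodF_fexp 1).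
by rewrite /exp_trunc big_ord1 fact0 invr1 scale1r expr0.
Qed.

Lemma filt1_flog1p y : F 1 y -> F 1 (flog1p F y).
Proof.
move=> Fy; apply: (eqmodF_filt _ Fy); have := eqmodF_flog1p 1 Fy.
by rewrite /log1p_trunc big_ord1 expr0 div1r invr1 scale1r expr1.
Qed.

Lemma flog1p0 : flog1p F 0 = 0.
Proof.
apply: eqmodF_eq => n; have := eqmodF_flog1p n.+1 (filt0 1).
by rewrite /log1p_trunc big1 // => k _; rewrite expr0n scaler0.
Qed.

Lemma filt_subXS n k a b : F 1 a -> F 1 b -> F n (a - b) ->
  F (n + k) (a ^+ k.+1 - b ^+ k.+1).
Proof.
move=> Fa Fb Fab; elim: k => [|k IHk]; first by rewrite addn0 !expr1.
have -> : a ^+ k.+2 - b ^+ k.+2 =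
    a * (a ^+ k.+1 - b ^+ k.+1) + (a - b) * b ^+ k.+1.
  by rewrite [a ^+ k.+2]exprS [b ^+ k.+2]exprS mulrBr mulrBl addrA subrK.
rewrite addnS; apply: filtD; first by rewrite -add1n; apply: filtM.
by rewrite -addnS; apply/filtM/filtX.
Qed.

Lemma filtS_sum_subXSS m N (c : nat -> K) x y : F 1 x -> F 1 y -> F m (x - y) ->
  F m.+1 (\sum_(k < N) c k *: (x ^+ k.+2 - y ^+ k.+2)).
Proof.
move=> Fx Fy Fxy; apply: filt_sum => k _; apply: filtZ.
apply: (@filt_le _ (m + k.+1)); first by rewrite addnS ltnS leq_addr.
exact: filt_subXS.
Qed.

Lemma fexpB_eqmodF m x y : F 1 x -> F 1 y -> F m (x - y) ->
  eqmodF m.+1 (fexp F x - fexp F y) (x - y).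
Proof.
move=> Fx Fy Fxy.
apply: (@eqmodF_trans _ _ (exp_trunc x m.+2 - exp_trunc y m.+2)).
  by apply: eqmodFB; apply: (filt_le (leqnSn _)); apply: eqmodF_fexp.
rewrite /eqmodF exp_truncB addrC addKr.
exact: (@filtS_sum_subXSS _ _ (fun k => k.+2`!%:R^-1) x y).
Qed.

Lemma flog1pB_eqmodF m y z : F 1 y -> F 1 z -> F m (y - z) ->
  eqmodF m.+1 (flog1p F y - flog1p F z) (y - z).
Proof.
move=> Fy Fz Fyz.
apply: (@eqmodF_trans _ _ (log1p_trunc y m.+1 - log1p_trunc z m.+1)).
  by apply: eqmodFB; apply: eqmodF_flog1p.
rewrite /eqmodF log1p_truncB addrC addKr.
exact: (@filtS_sum_subXSS _ _ (fun k => (-1) ^+ k.+1 / k.+2%:R) y z).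
Qed.

Lemma eqmodF_horner_alg n z (p q : {poly K}) : F 1 z ->
  (forall i, (i < n)%N -> p`_i = q`_i) ->
  eqmodF n (horner_alg z p) (horner_alg z q).
Proof.
move=> Fz Epq; rewrite /eqmodF -rmorphB -[p - q]coefK poly_def rmorph_sum.
apply: filt_sum => i _; rewrite -mul_polyC rmorphM /= horner_algC rmorphXn /=.
rewrite horner_algX mulr_algl coefB; case: (ltnP i n) => [/Epq->|le_ni].
  by rewrite subrr scale0r; apply: filt0.
by apply/filtZ/(filt_le le_ni)/filtX.
Qed.

Lemma filt1_fexpM_sub1 x y : F 1 x -> F 1 y -> F 1 (fexp F x * fexp F y - 1).
Proof.
move=> /filt1_fexp_sub1 Fx /filt1_fexp_sub1 Fy.
have -> : fexp F x * fexp F y - 1 = (fexp F x - 1) * fexp F y + (fexp F y - 1).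
  by rewrite mulrBl mul1r addrA subrK.
by apply: filtD => //; apply: filtMr.
Qed.

Lemma eqmodF_mulr m a b : F m a -> F 1 (b - 1) -> eqmodF m.+1 (a * b) a.
Proof.
by move=> Fa Fb; rewrite /eqmodF -{2}[a]mulr1 -mulrBr -addn1; apply: filtM.
Qed.

Lemma eqmodF_mull m a b : F m a -> F 1 (b - 1) -> eqmodF m.+1 (b * a) a.
Proof.
by move=> Fa Fb; rewrite /eqmodF -{2}[a]mul1r -mulrBl -add1n; apply: filtM.
Qed.

Lemma fexpM_eqmodF m x y x' y' : F 1 x -> F 1 y -> F 1 x' -> F 1 y' ->
  F m (x - x') -> F m (y - y') ->
  eqmodF m.+1 (fexp F x * fexp F y - fexp F x' * fexp F y') ((x - x') + (y - y')).
Proof.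
move=> Fx Fy Fx' Fy' Fxx' Fyy'.
have Ex := fexpB_eqmodF Fx Fx' Fxx'; have Ey := fexpB_eqmodF Fy Fy' Fyy'.
have Fex := eqmodF_filt (filt_le (leqnSn m) Ex) Fxx'.
have Fey := eqmodF_filt (filt_le (leqnSn m) Ey) Fyy'.
have -> : fexp F x * fexp F y - fexp F x' * fexp F y' =
    (fexp F x - fexp F x') * fexp F y + fexp F x' * (fexp F y - fexp F y').
  by rewrite mulrBl mulrBr addrA subrK.
apply: eqmodFD.
  exact: eqmodF_trans (eqmodF_mulr Fex (filt1_fexp_sub1 Fy)) Ex.
exact: eqmodF_trans (eqmodF_mull Fey (filt1_fexp_sub1 Fx')) Ey.
Qed.

Lemma BCH_contract m x y x' y' : F 1 x -> F 1 y -> F 1 x' -> F 1 y' ->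
  F m (x - x') -> F m (y - y') -> F m.+1 (BCH F x y - BCH F x' y').
Proof.
move=> Fx Fy Fx' Fy' Fxx' Fyy'.
have Ez := fexpM_eqmodF Fx Fy Fx' Fy' Fxx' Fyy'.
set z := fexp F x * fexp F y in Ez *; set z' := fexp F x' * fexp F y' in Ez *.
have Fz : F m ((z - 1) - (z' - 1)).
  rewrite opprB addrA subrK; apply: (eqmodF_filt (filt_le (leqnSn m) Ez)).
  exact: filtD.
have El := flog1pB_eqmodF (filt1_fexpM_sub1 Fx Fy) (filt1_fexpM_sub1 Fx' Fy') Fz.
rewrite /BCH /flog -/z -/z'.
have -> : forall L L' : A, (L - x - y) - (L' - x' - y') =
    (L - L') - ((x - x') + (y - y')).
  by move=> L L'; rewrite !opprD !opprK !addrA (ACl (1*4*2*5*3*6)%AC).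
rewrite opprB addrA subrK in El.
exact: eqmodF_trans El Ez.
Qed.

Lemma filt1_BCH x y : F 1 x -> F 1 y -> F 1 (BCH F x y).
Proof.
by move=> Fx Fy; apply/filtB/Fy/filtB/Fx/filt1_flog1p/filt1_fexpM_sub1.
Qed.

Lemma add_BCHN x u :
  u + BCH F (- x) u = flog1p F (fexp F (- x) * fexp F u - 1) + x.
Proof. by rewrite /BCH /flog opprK addrC subrK. Qed.

Section CharacteristicZero.
Hypothesis charK0 : [pchar K] =i pred0.

Lemma fexpK x : F 1 x -> flog1p F (fexp F x - 1) = x.
Proof.
move=> Fx; apply: eqmodF_eq => n.
apply: (eqmodF_trans (eqmodF_flog1p n.+1 (filt1_fexp_sub1 Fx))).
apply: (@eqmodF_trans _ _ (log1p_trunc (exp_trunc x n.+1 - 1) n.+1)).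
  rewrite /eqmodF /log1p_trunc -sumrB; apply: filt_sum => k _.
  rewrite -scalerBr; apply/filtZ/eqmodFX.
  exact/(eqmodFB (eqmodF_fexp _ Fx))/eqmodF_refl.
have -> : log1p_trunc (exp_trunc x n.+1 - 1) n.+1 =
    horner_alg x (log1p_trunc (exp_trunc 'X n.+1 - 1) n.+1).
  rewrite horner_alg_log1p_trunc rmorphB /= horner_alg_exp_trunc rmorph1.
  by rewrite horner_algX.
rewrite -[X in eqmodF _ _ X](horner_algX x).
apply: eqmodF_horner_alg => // i lt_in.
by rewrite coef_log1p_exp_trunc // coefX.
Qed.

Lemma flog1p_inj y z : F 1 y -> F 1 z -> flog1p F y = flog1p F z -> y = z.
Proof.
move=> Fy Fz Elog; apply: eqmodF_eq; elim=> [|n IHn]; first exact: filtB.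
have := flog1pB_eqmodF Fy Fz IHn; rewrite /eqmodF Elog subrr sub0r.
by move=> /filtN; rewrite opprK.
Qed.

Lemma flog1pK y : F 1 y -> fexp F (flog1p F y) - 1 = y.
Proof.
move=> Fy; have Flog := filt1_flog1p Fy.
by apply: flog1p_inj => //; [apply: filt1_fexp_sub1 | rewrite fexpK].
Qed.

Lemma mul_fexpN x : F 1 x -> fexp F (- x) * fexp F x = 1.
Proof.
move=> Fx; apply: eqmodF_eq => n.
apply: (@eqmodF_trans _ _ (exp_trunc (- x) n.+1 * exp_trunc x n.+1)).
  by apply: eqmodFM; apply: eqmodF_fexp => //; apply: filtN.
have -> : exp_trunc (- x) n.+1 * exp_trunc x n.+1 =
    horner_alg x (exp_trunc (- 'X) n.+1 * exp_trunc 'X n.+1).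
  by rewrite rmorphM /= !horner_alg_exp_trunc rmorphN /= horner_algX.
rewrite -(rmorph1 (horner_alg x)); apply: eqmodF_horner_alg => // i lt_in.
by rewrite coef_mul_exp_truncN // coef1.
Qed.

Section Projection.
Variable P : {linear A -> A}.
Hypothesis P_filt : forall n x, F n x -> F n (P x).
Hypothesis PM : forall x y, P (x * y) = P x * P y.
Hypothesis P_idem : forall x, P (P x) = P x.

Lemma P_exprS x k : P (x ^+ k.+1) = P x ^+ k.+1.
Proof. by elim: k => [|k IHk]; rewrite ?expr1 // exprS PM IHk -exprS. Qed.

Lemma P_fexp_sub1 x : F 1 x -> P (fexp F x - 1) = fexp F (P x) - 1.
Proof.
move=> Fx; apply: eqmodF_eq => n.
have P_trunc : P (exp_trunc x n.+1 - 1) = exp_trunc (P x) n.+1 - 1.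
  rewrite !exp_trunc_sub1 linear_sum; apply: eq_bigr => k _.
  by rewrite linearZ /= P_exprS.
apply: (@eqmodF_trans _ _ (P (exp_trunc x n.+1 - 1))).
  by rewrite /eqmodF -linearB opprB addrA subrK; apply/P_filt/eqmodF_fexp.
rewrite P_trunc; apply: eqmodFB (eqmodF_refl _ _).
by apply/eqmodF_sym/eqmodF_fexp/P_filt.
Qed.

Lemma P_flog1p y : F 1 y -> P (flog1p F y) = flog1p F (P y).
Proof.
move=> Fy; apply: eqmodF_eq => n.
have P_trunc : P (log1p_trunc y n.+1) = log1p_trunc (P y) n.+1.
  rewrite linear_sum; apply: eq_bigr => k _.
  by rewrite linearZ /= P_exprS.
apply: (@eqmodF_trans _ _ (P (log1p_trunc y n.+1))).
  by rewrite /eqmodF -linearB; apply/P_filt/eqmodF_flog1p.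
by rewrite P_trunc; apply/eqmodF_sym/eqmodF_flog1p/P_filt.
Qed.

Definition bch_step u c := u - BCH F (P c) (c - P c).

Lemma bch_step_contract u m c c' : F 1 c -> F 1 c' -> F m (c - c') ->
  F m.+1 (bch_step u c - bch_step u c').
Proof.
move=> Fc Fc' Fcc'; rewrite /bch_step.
have -> : forall B B' : A, (u - B) - (u - B') = - (B - B').
  by move=> B B'; rewrite opprB [LHS]addrC subrKA opprB.
have [FPc FPc'] := (P_filt Fc, P_filt Fc').
have FPcc' : F m (P c - P c') by rewrite -linearB; apply: P_filt.
apply/filtN/BCH_contract; [by [] | exact: filtB | by [] | exact: filtB | by [] |].
suff -> : (c - P c) - (c' - P c') = (c - c') - (P c - P c') by apply: filtB.
by rewrite !opprD !opprK !addrA (ACl (1*3*2*4)%AC).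
Qed.

Lemma P_add_BCHN u : F 1 u -> P (u + BCH F (- P u) u) = P u.
Proof.
move=> Fu; have FPu := P_filt Fu; have FNPu := filtN FPu.
(* P 1 need not be 1, so P is only pushed through the terms fexp _ - 1. *)
have mul_sub1 (p q : A) : p * q - 1 = (p - 1) + (q - 1) + (p - 1) * (q - 1).
  rewrite addrAC -{1}[p - 1]mulr1 -mulrDr [1 + _]addrC subrK.
  by rewrite mulrBl mul1r addrA subrK.
rewrite add_BCHN linearD P_idem P_flog1p; last exact: filt1_fexpM_sub1.
rewrite mul_sub1 linearD linearD PM !P_fexp_sub1 // linearN P_idem -mul_sub1.
rewrite mul_fexpN //.
by rewrite subrr flog1p0 add0r.
Qed.

Lemma bch_step_fixed u : F 1 u ->
  bch_step u (u + BCH F (- P u) u) = u + BCH F (- P u) u.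
Proof.
move=> Fu; have FNPu := filtN (P_filt Fu).
set L := flog1p F (fexp F (- P u) * fexp F u - 1).
have expL : fexp F L = fexp F (- P u) * fexp F u.
  by apply: (addIr (-1)); rewrite flog1pK //; apply: filt1_fexpM_sub1.
rewrite /bch_step P_add_BCHN // add_BCHN -/L addrK /BCH /flog expL mulrA.
rewrite -{1}(opprK (P u)) mul_fexpN // mul1r fexpK //.
by rewrite !opprD !opprK !addrA subrr add0r addrC.
Qed.

End Projection.

End CharacteristicZero.
End Filtration.

Theorem lemma2p7 (K : fieldType) (A : algType K) (F : nat -> A -> Prop)
  (P : {linear A -> A}) :
  [pchar K] =i pred0 ->
  complete_filtration F ->
  (forall n x, F n x -> F n (P x)) ->
  (forall x y, P (x * y) = P x * P y) ->
  (forall x, P (P x) = P x) ->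
  forall u, F 1%N u -> bch_rec F P u = u + BCH F (- P u) u.
Proof.
move=> charK0 HF P_filt PM P_idem u Fu.
apply: (flim_iter_contract HF (f := bch_step F P u)) => //.
- by move=> m c c'; apply: bch_step_contract.
- exact: bch_step_fixed.
- apply: (filtD HF Fu); apply: (filt1_BCH HF _ Fu).
  exact/(filtN HF)/P_filt.
Qed.
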